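(* Let $-1 \le a < b \le 1$, and set $\alpha = \arccos a$, $\beta = \arccos b$ (so $0 \le \beta < \alpha \le \pi$). Define $g:[0,\pi]\to\mathbb{R}$ by $g(\theta)=1$ for $\theta\in(\beta,\alpha)$, $g(\theta)=\tfrac12$ for $\theta\in\{\alpha,\beta\}$, and $g(\theta)=0$ for $\theta\in[0,\pi]\setminus[\beta,\alpha]$. Let \[ c_0=\frac{1}{\pi}(\alpha-\beta),\qquad c_j=\frac{2}{\pi}\cdot\frac{\sin(j\alpha)-\sin(j\beta)}{j}\quad (j\ge 1), \] and for $k\ge 1$ let $g_k(\theta)=\sum_{j=0}^k c_j\cos(j\theta)$. Then for every integer $k \ge 1$ and every $\theta\in[0,\pi]$, \[ |g(\theta)-g_k(\theta)|\le \frac{J(\theta)}{\pi(k+1)}, \] where \[ J(\theta)=\begin{cases} \frac{1}{|\sin\frac{\theta+\alpha}{2}|}+\frac{1}{|\sin\frac{\theta-\alpha}{2}|}+\frac{1}{|\sin\frac{\theta+\beta}{2}|}+\frac{1}{|\sin\frac{\theta-\beta}{2}|}, & \theta\ne\alpha,\beta,\\[4pt] \frac{1}{|\sin\alpha|}+\frac{1}{|\sin\frac{\alpha+\beta}{2}|}+\frac{1}{|\sin\frac{\alpha-\beta}{2}|}, & \theta=\alpha,\\[4pt] \frac{1}{|\sin\beta|}+\frac{1}{|\sin\frac{\alpha+\beta}{2}|}+\frac{1}{|\sin\frac{\alpha-\beta}{2}|}, & \theta=\beta. \end{cases} \]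
   Context: Any term of the form $1/0$ in $J(\theta)$ is interpreted as $+\infty$, in which case the bound holds trivially. The function $g$ is $s(\cos\theta)$ where $s$ is the step function equal to $1$ on $(a,b)$, $\tfrac12$ at $a,b$, and $0$ elsewhere on $[-1,1]$; $g_k$ is the $k$-th partial sum of its Fourier cosine series (equivalently, the degree-$k$ Chebyshev truncation of $s$). *)

From Stdlib Require Import Reals.
Open Scope R_scope.

Definition g_fun (alpha beta theta : R) : R :=
  if Rlt_dec beta theta then
    (if Rlt_dec theta alpha then 1
     else if Req_EM_T theta alpha then /2 else 0)
  else if Req_EM_T theta beta then /2 else 0.

Definition coef (alpha beta : R) (j : nat) : R :=
  match j with
  | O => (alpha - beta) / PI
  | S _ => (2 / PI) * ((sin (INR j * alpha) - sin (INR j * beta)) / INR j)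
  end.

(* g_k(theta) = sum_{j=0}^k c_j cos(j theta)  (sum_f_R0 f k has k+1 terms). *)
Definition g_k (alpha beta : R) (k : nat) (theta : R) : R :=
  sum_f_R0 (fun j => coef alpha beta j * cos (INR j * theta)) k.

(* The denominators occurring in J(theta): J(theta) is finite iff all are nonzero. *)
Definition J_finite (alpha beta theta : R) : Prop :=
  if Req_EM_T theta alpha then
    sin alpha <> 0 /\ sin ((alpha + beta) / 2) <> 0 /\ sin ((alpha - beta) / 2) <> 0
  else if Req_EM_T theta beta then
    sin beta <> 0 /\ sin ((alpha + beta) / 2) <> 0 /\ sin ((alpha - beta) / 2) <> 0
  else
    sin ((theta + alpha) / 2) <> 0 /\ sin ((theta - alpha) / 2) <> 0 /\
    sin ((theta + beta) / 2) <> 0 /\ sin ((theta - beta) / 2) <> 0.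

Definition J_fun (alpha beta theta : R) : R :=
  if Req_EM_T theta alpha then
    / Rabs (sin alpha) + / Rabs (sin ((alpha + beta) / 2))
    + / Rabs (sin ((alpha - beta) / 2))
  else if Req_EM_T theta beta then
    / Rabs (sin beta) + / Rabs (sin ((alpha + beta) / 2))
    + / Rabs (sin ((alpha - beta) / 2))
  else
    / Rabs (sin ((theta + alpha) / 2)) + / Rabs (sin ((theta - alpha) / 2))
    + / Rabs (sin ((theta + beta) / 2)) + / Rabs (sin ((theta - beta) / 2)).

From Stdlib Require Import Reals Lra Lia.
From Coquelicot Require Import Coquelicot.
Open Scope R_scope.

(* Let S_k(x) = sum_{j=1}^k sin(jx)/j and let sawtooth be the odd function equal to
   (pi - x)/2 on (0, 2pi).  Product-to-sum turns g_k(theta) into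
   (alpha - beta)/pi + [S_k(alpha+theta) + S_k(alpha-theta) - S_k(beta+theta) - S_k(beta-theta)]/pi,
   and g(theta) is the same expression with sawtooth in place of S_k, as long as
   alpha + theta < 2pi and beta + theta > 0 (which is what J_finite guarantees).  So it
   suffices that |sawtooth x - S_k(x)| <= 1 / ((k+1) |sin(x/2)|) on (-2pi, 2pi).
   Writing sin((j+1)x) = C_j - C_(j+1) with C_j = cos((j+1/2)x) / (2 sin(x/2)), which is
   bounded by 1 / (2 |sin(x/2)|), Abel summation gives this bound for S_n(x) - S_k(x)
   uniformly in n >= k; and S_n(x) - (pi - x)/2 = O(1/n), by a monotonicity argument
   based on the Dirichlet kernel. *)

Fixpoint sine_sum (n : nat) (x : R) : R :=
  match n with
  | O => 0
  | S m => sine_sum m x + sin (INR (S m) * x) / INR (S m)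
  end.

Fixpoint cosine_sum (n : nat) (x : R) : R :=
  match n with
  | O => 0
  | S m => cosine_sum m x + cos (INR (S m) * x)
  end.

Definition sawtooth (x : R) : R :=
  if Rlt_dec 0 x then (PI - x) / 2
  else if Rlt_dec x 0 then - (PI + x) / 2 else 0.

Lemma INR_S_neq0 n : INR (S n) <> 0.
Proof. apply not_0_INR; lia. Qed.

Lemma dirichlet_kernel n t :
  2 * sin (t / 2) * (/ 2 + cosine_sum n t) = sin ((INR n + / 2) * t).
Proof.
  induction n as [|m IH]; cbn [cosine_sum].
  - replace ((INR 0 + / 2) * t) with (t / 2) by (simpl; field). field.
  - transitivity (2 * sin (t / 2) * (/ 2 + cosine_sum m t)
                  + 2 * sin (t / 2) * cos (INR (S m) * t)); [ring|].
    rewrite IH, S_INR.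
    replace ((INR m + / 2) * t) with ((INR m + 1) * t - t / 2) by field.
    replace ((INR m + 1 + / 2) * t) with ((INR m + 1) * t + t / 2) by field.
    rewrite sin_minus, sin_plus. ring.
Qed.

Lemma is_derive_sine_sum n t : is_derive (sine_sum n) t (cosine_sum n t).
Proof.
  induction n as [|m IH]; cbn [sine_sum cosine_sum].
  - auto_derive; easy.
  - apply (is_derive_plus (sine_sum m)); [exact IH|].
    pose proof (INR_S_neq0 m). set (j := INR (S m)) in *.
    auto_derive; [easy | field; easy].
Qed.

Lemma sine_sum_odd n x : sine_sum n (- x) = - sine_sum n x.
Proof.
  induction n as [|m IH]; cbn [sine_sum]; [ring|].
  rewrite IH, Ropp_mult_distr_r_reverse, sin_neg. field. apply INR_S_neq0.
Qed.

Lemma sine_sum_2PI_sub n x : sine_sum n (2 * PI - x) = - sine_sum n x.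
Proof.
  induction n as [|m IH]; cbn [sine_sum]; [ring|].
  replace (INR (S m) * (2 * PI - x)) with (- (INR (S m) * x) + 2 * INR (S m) * PI)
    by ring.
  rewrite IH, sin_period, sin_neg. field. apply INR_S_neq0.
Qed.

Lemma sine_sum_0 n : sine_sum n 0 = 0.
Proof.
  induction n as [|m IH]; cbn [sine_sum]; [reflexivity|].
  rewrite IH, Rmult_0_r, sin_0. field. apply INR_S_neq0.
Qed.

Lemma sin_INR_mult_PI j : sin (INR j * PI) = 0.
Proof. apply sin_eq_0_1. exists (Z.of_nat j). rewrite INR_IZR_INZ. reflexivity. Qed.

Lemma sine_sum_PI n : sine_sum n PI = 0.
Proof.
  induction n as [|m IH]; cbn [sine_sum]; [reflexivity|].
  rewrite IH, sin_INR_mult_PI. field. apply INR_S_neq0.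
Qed.

Lemma cos_half_odd_mult_PI n : cos ((INR n + / 2) * PI) = 0.
Proof.
  replace ((INR n + / 2) * PI) with (INR n * PI + PI / 2) by field.
  rewrite cos_plus, cos_PI2, sin_PI2, sin_INR_mult_PI. ring.
Qed.

Lemma nonpos_derive_antitone f df a b : a <= b ->
  (forall t, a <= t <= b -> is_derive f t (df t)) ->
  (forall t, a <= t <= b -> df t <= 0) -> f b <= f a.
Proof.
  intros Hab Hf Hdf.
  destruct (MVT_gen f a b df) as [c [Hc Hmvt]]; rewrite Rmin_left, Rmax_right in * by lra.
  - intros t Ht. apply Hf. lra.
  - intros t Ht. apply continuity_pt_filterlim, (ex_derive_continuous f).
    exists (df t). now apply Hf.
  - assert (df c * (b - a) <= 0) by (pose proof (Hdf c Hc); nra). lra.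
Qed.

Lemma sine_sum_rate_signed n x e : 0 < x <= PI -> -1 <= e <= 1 ->
  - (2 / ((2 * INR n + 1) * sin (x / 2))) <= e * (sine_sum n x - (PI - x) / 2).
Proof.
  intros Hx He.
  pose proof (pos_INR n) as Hn.
  assert (Hsin : forall t, x <= t <= PI -> 0 < sin (t / 2)).
  { intros t Ht. apply sin_gt_0; lra. }
  (* By the Dirichlet kernel identity the sin((n+1/2)t) terms of F' cancel, leaving
     F' = - (1 + e cos((n+1/2)t)) cos(t/2) / (2 (2n+1) sin(t/2)^2) <= 0; and F PI = 1/(2n+1). *)
  set (F := fun t => e * (sine_sum n t - (PI - t) / 2)
                     + (1 + e * cos ((INR n + / 2) * t)) / ((2 * INR n + 1) * sin (t / 2))).
  assert (Hmono : F PI <= F x).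
  { apply (nonpos_derive_antitone F (fun t =>
      - (1 + e * cos ((INR n + / 2) * t)) * cos (t / 2)
        / (2 * (2 * INR n + 1) * sin (t / 2) ^ 2))); [lra| |].
    - intros t Ht. pose proof (Hsin t Ht).
      assert (Hkernel : cosine_sum n t = sin ((INR n + / 2) * t) / (2 * sin (t / 2)) - / 2).
      { rewrite <- dirichlet_kernel. field. lra. }
      unfold F. auto_derive.
      + change (t * / 2) with (t / 2).
        repeat split; [eexists; apply is_derive_sine_sum | nra].
      + replace (Derive _ t) with (cosine_sum n t)
          by (symmetry; apply is_derive_unique, is_derive_sine_sum).
        rewrite Hkernel. change (t * / 2) with (t / 2). field. lra.
    - intros t Ht. pose proof (Hsin t Ht).
      assert (0 <= cos (t / 2)) by (apply cos_ge_0; lra).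
      assert (0 <= 1 + e * cos ((INR n + / 2) * t))
        by (pose proof (COS_bound ((INR n + / 2) * t)); nra).
      assert (0 < / (2 * (2 * INR n + 1) * sin (t / 2) ^ 2))
        by (apply Rinv_0_lt_compat, Rmult_lt_0_compat; [lra | apply pow_lt; lra]).
      assert (0 <= (1 + e * cos ((INR n + / 2) * t)) * cos (t / 2)) by now apply Rmult_le_pos.
      unfold Rdiv. nra. }
  unfold F in Hmono.
  rewrite sine_sum_PI, cos_half_odd_mult_PI, Rmult_0_r, Rplus_0_r in Hmono.
  rewrite sin_PI2 in Hmono.
  assert (0 < sin (x / 2)) by (apply Hsin; lra).
  assert (Hcos : e * cos ((INR n + / 2) * x) <= 1)
    by (pose proof (COS_bound ((INR n + / 2) * x)); nra).
  assert (0 < / ((2 * INR n + 1) * sin (x / 2)))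
    by (apply Rinv_0_lt_compat, Rmult_lt_0_compat; lra).
  assert (0 < 1 / ((2 * INR n + 1) * 1)) by (apply Rdiv_lt_0_compat; lra).
  unfold Rdiv in *. nra.
Qed.

Lemma sine_sum_rate n x : 0 < x < 2 * PI ->
  Rabs (sine_sum n x - (PI - x) / 2) <= 2 / ((2 * INR n + 1) * Rabs (sin (x / 2))).
Proof.
  assert (Hhalf : forall y, 0 < y <= PI ->
    Rabs (sine_sum n y - (PI - y) / 2) <= 2 / ((2 * INR n + 1) * sin (y / 2))).
  { intros y Hy. apply Rabs_le.
    pose proof (sine_sum_rate_signed n y 1 Hy ltac:(lra)).
    pose proof (sine_sum_rate_signed n y (-1) Hy ltac:(lra)).
    lra. }
  intros Hx. rewrite (Rabs_pos_eq (sin (x / 2))) by (left; apply sin_gt_0; lra).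
  destruct (Rle_or_lt x PI) as [Hle | Hgt]; [apply Hhalf; lra|].
  specialize (Hhalf (2 * PI - x) ltac:(lra)).
  rewrite sine_sum_2PI_sub in Hhalf.
  replace ((2 * PI - x) / 2) with (PI - x / 2) in Hhalf by field.
  rewrite sin_PI_x in Hhalf.
  replace (sine_sum n x - (PI - x) / 2) with (- (- sine_sum n x - (PI - (2 * PI - x)) / 2))
    by field.
  now rewrite Rabs_Ropp.
Qed.

Lemma abel_summation_bound (F C u : nat -> R) (M : R) (k n : nat) :
  (forall j, F (S j) - F j = (C j - C (S j)) * u j) ->
  (forall j, Rabs (C j) <= M) ->
  (forall j, 0 <= u (S j) <= u j) ->
  (k <= n)%nat -> Rabs (F n - F k) <= 2 * M * u k.
Proof.
  intros HF HC Hu Hkn.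
  assert (HCb : forall j, - M <= C j <= M) by (intros j; apply Rabs_le_between, HC).
  assert (Hinv : Rabs (F n - F k - C k * u k + C n * u n) <= M * (u k - u n)).
  { induction Hkn as [|n Hkn IH].
    - replace (F k - F k - C k * u k + C k * u k) with 0 by ring.
      rewrite Rabs_R0, Rminus_diag, Rmult_0_r. apply Rle_refl.
    - apply Rabs_le_between in IH. apply Rabs_le_between.
      pose proof (HF n). pose proof (Hu n). pose proof (HCb (S n)). nra. }
  assert (Hun : u n <= u k).
  { clear -Hu Hkn. induction Hkn as [|n _ IH]; [|specialize (Hu n)]; lra. }
  pose proof (Hu n).
  apply Rabs_le_between in Hinv. apply Rabs_le_between.
  pose proof (HCb k). pose proof (HCb n). nra.
Qed.

Lemma sine_sum_cauchy x k n : sin (x / 2) <> 0 -> (k <= n)%nat ->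
  Rabs (sine_sum n x - sine_sum k x) <= / (INR (S k) * Rabs (sin (x / 2))).
Proof.
  intros Hs Hkn.
  assert (Habs : 0 < Rabs (sin (x / 2))) by now apply Rabs_pos_lt.
  set (C := fun j => cos ((INR j + / 2) * x) / (2 * sin (x / 2))).
  replace (/ (INR (S k) * Rabs (sin (x / 2))))
    with (2 * / (2 * Rabs (sin (x / 2))) * / INR (S k))
    by (field; split; [lra | apply INR_S_neq0]).
  apply (abel_summation_bound (fun j => sine_sum j x) C (fun j => / INR (S j)));
    [| | | exact Hkn].
  - intros j. cbn [sine_sum]. unfold C. rewrite !S_INR.
    replace ((INR j + / 2) * x) with ((INR j + 1) * x - x / 2) by field.
    replace ((INR j + 1 + / 2) * x) with ((INR j + 1) * x + x / 2) by field.
    rewrite cos_minus, cos_plus. rewrite <- S_INR. field. split; [apply INR_S_neq0 | easy].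
  - intros j. unfold C, Rdiv. rewrite Rabs_mult, Rabs_inv, Rabs_mult, (Rabs_pos_eq 2) by lra.
    rewrite <- (Rmult_1_l (/ (2 * _))) at 2.
    apply Rmult_le_compat_r; [left; apply Rinv_0_lt_compat; lra|].
    apply Rabs_le, COS_bound.
  - intros j. pose proof (lt_0_INR (S j) ltac:(lia)). split.
    + left. apply Rinv_0_lt_compat. rewrite (S_INR (S j)). lra.
    + apply Rinv_le_contravar; [easy|]. rewrite (S_INR (S j)). lra.
Qed.

Lemma Rle_of_le_plus_vanishing (A B c : R) (k : nat) :
  (forall n, (k <= n)%nat -> A <= B + c / (2 * INR n + 1)) -> A <= B.
Proof.
  intros H. destruct (Rle_or_lt A B) as [|Hlt]; [easy|]. exfalso.
  destruct (Rle_or_lt c 0) as [Hc | Hc].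
  - specialize (H k (le_n k)). pose proof (pos_INR k).
    assert (0 < / (2 * INR k + 1)) by (apply Rinv_0_lt_compat; lra).
    unfold Rdiv in H. nra.
  - destruct (INR_archimed (A - B) c) as [N HN]; [lra|].
    specialize (H (N + k)%nat ltac:(lia)).
    rewrite plus_INR in H. pose proof (pos_INR k). pose proof (pos_INR N).
    assert (c / (2 * (INR N + INR k) + 1) < A - B); [|lra].
    apply Rlt_div_l; nra.
Qed.

Lemma sine_sum_tail k x : 0 < x < 2 * PI ->
  Rabs ((PI - x) / 2 - sine_sum k x) <= / (INR (S k) * Rabs (sin (x / 2))).
Proof.
  intros Hx.
  assert (Hs : 0 < sin (x / 2)) by (apply sin_gt_0; lra).
  assert (Habs : 0 < Rabs (sin (x / 2))) by (apply Rabs_pos_lt; lra).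
  apply (Rle_of_le_plus_vanishing _ _ (2 / Rabs (sin (x / 2))) k).
  intros n Hkn.
  pose proof (sine_sum_cauchy x k n ltac:(lra) Hkn).
  pose proof (sine_sum_rate n x Hx).
  pose proof (pos_INR n).
  replace (2 / Rabs (sin (x / 2)) / (2 * INR n + 1))
    with (2 / ((2 * INR n + 1) * Rabs (sin (x / 2)))) by (field; lra).
  replace ((PI - x) / 2 - sine_sum k x)
    with ((sine_sum n x - sine_sum k x) - (sine_sum n x - (PI - x) / 2)) by ring.
  eapply Rle_trans; [apply Rabs_triang|]. rewrite Rabs_Ropp. lra.
Qed.

Lemma sawtooth_sub_sine_sum k x : - (2 * PI) < x < 2 * PI ->
  Rabs (sawtooth x - sine_sum k x) <= / (INR (S k) * Rabs (sin (x / 2))).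
Proof.
  intros Hx. unfold sawtooth.
  destruct (Rlt_dec 0 x) as [Hpos | Hnpos]; [now apply sine_sum_tail|].
  destruct (Rlt_dec x 0) as [Hneg | Hzero].
  - pose proof (sine_sum_tail k (- x) ltac:(lra)) as H.
    rewrite sine_sum_odd in H.
    replace (- x / 2) with (- (x / 2)) in H by field.
    rewrite sin_neg, Rabs_Ropp in H.
    replace (- (PI + x) / 2 - sine_sum k x)
      with (- ((PI - - x) / 2 - - sine_sum k x)) by field.
    now rewrite Rabs_Ropp.
  - (* Both sides vanish at x = 0, the right one because / 0 = 0. *)
    replace x with 0 by lra.
    rewrite sine_sum_0, Rminus_0_r, Rabs_R0, Rdiv_0_l, sin_0, Rabs_R0, Rmult_0_r, Rinv_0.
    apply Rle_refl.
Qed.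

Definition arc_combination (f : R -> R) (al be th : R) : R :=
  f (al + th) + f (al - th) - f (be + th) - f (be - th).

Lemma g_k_eq_sine_sum al be k th :
  g_k al be k th = (al - be) / PI + arc_combination (sine_sum k) al be th / PI.
Proof.
  pose proof PI_RGT_0. unfold arc_combination.
  induction k as [|m IH]; unfold g_k in *; cbn [sum_f_R0 sine_sum].
  - simpl coef. rewrite Rmult_0_l, cos_0. field. lra.
  - rewrite IH. unfold coef. pose proof (INR_S_neq0 m). set (j := INR (S m)) in *.
    rewrite !Rmult_plus_distr_l, !Rmult_minus_distr_l, !sin_plus, !sin_minus.
    field. lra.
Qed.

Lemma g_fun_eq_sawtooth al be th :
  0 <= be < al -> al <= PI -> 0 <= th <= PI -> 0 < th + be -> th + al < 2 * PI ->
  g_fun al be th = (al - be) / PI + arc_combination sawtooth al be th / PI.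
Proof.
  intros. pose proof PI_RGT_0.
  apply (Rmult_eq_reg_l PI); [|lra].
  replace (PI * ((al - be) / PI + arc_combination sawtooth al be th / PI))
    with (al - be + arc_combination sawtooth al be th) by (field; lra).
  unfold g_fun, arc_combination, sawtooth.
  repeat match goal with
  | |- context [Rlt_dec ?u ?v] => destruct (Rlt_dec u v)
  | |- context [Req_EM_T ?u ?v] => destruct (Req_EM_T u v)
  end; lra.
Qed.

Lemma Rabs_sin_half_sub_comm u v : Rabs (sin ((u - v) / 2)) = Rabs (sin ((v - u) / 2)).
Proof.
  replace ((u - v) / 2) with (- ((v - u) / 2)) by field.
  now rewrite sin_neg, Rabs_Ropp.
Qed.

(* At theta = alpha (resp. beta) the vanishing denominator contributes / 0 = 0. *)
Lemma J_fun_eq al be th :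
  J_fun al be th =
  / Rabs (sin ((al + th) / 2)) + / Rabs (sin ((al - th) / 2))
  + / Rabs (sin ((be + th) / 2)) + / Rabs (sin ((be - th) / 2)).
Proof.
  assert (Hdouble : forall u, (u + u) / 2 = u) by (intros; field).
  assert (Hzero : / Rabs (sin ((th - th) / 2)) = 0)
    by now rewrite Rminus_diag, Rdiv_0_l, sin_0, Rabs_R0, Rinv_0.
  unfold J_fun.
  destruct (Req_EM_T th al) as [<- | _]; [|destruct (Req_EM_T th be) as [<- | _]].
  - rewrite Hdouble, Hzero, (Rplus_comm be), (Rabs_sin_half_sub_comm be). ring.
  - rewrite Hdouble, Hzero. ring.
  - rewrite (Rplus_comm al), (Rplus_comm be), (Rabs_sin_half_sub_comm al),
      (Rabs_sin_half_sub_comm be). reflexivity.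
Qed.

Lemma J_finite_arc_bounds al be th :
  0 <= be < al -> al <= PI -> 0 <= th <= PI -> J_finite al be th ->
  0 < th + be /\ th + al < 2 * PI.
Proof.
  intros Hbe Hal Hth. unfold J_finite.
  destruct (Req_EM_T th al) as [-> | _].
  - intros [Hsin _]. split; [lra|].
    destruct (Req_dec al PI) as [-> | ]; [now rewrite sin_PI in Hsin | lra].
  - destruct (Req_EM_T th be) as [-> | _].
    + intros [Hsin _]. split; [|lra].
      destruct (Req_dec be 0) as [-> | ]; [now rewrite sin_0 in Hsin | lra].
    + intros [Hsin_al [_ [Hsin_be _]]]. split.
      * destruct (Req_dec (th + be) 0) as [Hsum | ]; [|lra].
        now rewrite Hsum, Rdiv_0_l, sin_0 in Hsin_be.
      * destruct (Req_dec (th + al) (2 * PI)) as [Hsum | ]; [|lra].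
        rewrite Hsum in Hsin_al. replace (2 * PI / 2) with PI in Hsin_al by field.
        now rewrite sin_PI in Hsin_al.
Qed.

Lemma arc_combination_sawtooth_error al be th k :
  0 <= be < al -> al <= PI -> 0 <= th <= PI -> th + al < 2 * PI ->
  Rabs (arc_combination sawtooth al be th - arc_combination (sine_sum k) al be th)
  <= (/ Rabs (sin ((al + th) / 2)) + / Rabs (sin ((al - th) / 2))
      + / Rabs (sin ((be + th) / 2)) + / Rabs (sin ((be - th) / 2))) / INR (S k).
Proof.
  intros Hbe Hal Hth Hsum.
  assert (Htail : forall x, - (2 * PI) < x < 2 * PI ->
    - (/ Rabs (sin (x / 2)) / INR (S k)) <= sawtooth x - sine_sum k x
    <= / Rabs (sin (x / 2)) / INR (S k)).
  { intros x Hx. apply Rabs_le_between.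
    unfold Rdiv. rewrite Rmult_comm, <- Rinv_mult.
    now apply sawtooth_sub_sine_sum. }
  pose proof (Htail (al + th) ltac:(lra)). pose proof (Htail (al - th) ltac:(lra)).
  pose proof (Htail (be + th) ltac:(lra)). pose proof (Htail (be - th) ltac:(lra)).
  apply Rabs_le_between. unfold arc_combination, Rdiv in *. lra.
Qed.

Lemma acos_lt_acos a b : -1 <= a -> a < b -> b <= 1 -> acos b < acos a.
Proof.
  intros Ha Hab Hb.
  pose proof (acos_bound a). pose proof (acos_bound b).
  destruct (Rlt_or_le (acos b) (acos a)) as [|Hle]; [easy|exfalso].
  destruct (Rle_lt_or_eq_dec _ _ Hle) as [Hlt | Heq].
  - assert (cos (acos b) < cos (acos a)) by (apply cos_decreasing_1; lra).
    rewrite !cos_acos in * by lra. lra.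
  - apply (f_equal cos) in Heq. rewrite !cos_acos in Heq by lra. lra.
Qed.

Theorem theorem3p2 (a b : R) (k : nat) (theta : R) :
  -1 <= a -> a < b -> b <= 1 -> (1 <= k)%nat ->
  0 <= theta <= PI ->
  J_finite (acos a) (acos b) theta ->
  Rabs (g_fun (acos a) (acos b) theta - g_k (acos a) (acos b) k theta)
    <= J_fun (acos a) (acos b) theta / (PI * INR (k + 1)).
Proof.
  intros Ha Hab Hb _ Hth HJ.
  pose proof (acos_bound a). pose proof (acos_bound b).
  pose proof (acos_lt_acos a b Ha Hab Hb).
  set (al := acos a) in *. set (be := acos b) in *.
  destruct (J_finite_arc_bounds al be theta ltac:(lra) ltac:(lra) Hth HJ) as [Hpos Hsum].
  rewrite (g_fun_eq_sawtooth al be theta), g_k_eq_sine_sum, J_fun_eq, Nat.add_1_r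
    by (easy || lra).
  pose proof (arc_combination_sawtooth_error al be theta k ltac:(lra) ltac:(lra) Hth Hsum)
    as Herr.
  pose proof PI_RGT_0.
  replace (_ - _) with ((arc_combination sawtooth al be theta
                         - arc_combination (sine_sum k) al be theta) / PI) by (field; lra).
  unfold Rdiv in *. rewrite Rabs_mult, (Rabs_pos_eq (/ PI)), Rinv_mult
    by (left; apply Rinv_0_lt_compat; lra).
  rewrite (Rmult_comm (/ PI)), <- Rmult_assoc.
  apply Rmult_le_compat_r; [left; apply Rinv_0_lt_compat; lra | exact Herr].
Qed.
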